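(* Let $\mathcal{G}\simeq\mathcal{H}$ be equivalent graph sequences and let $K$ be a field. Then $\beta_K(\mathcal{G})=\beta_K(\mathcal{H})$.
   Context: A graph sequence is a sequence $\mathcal{G}=\{G_n\}$ of finite simple graphs with uniformly bounded vertex degrees and $|V(G_n)|\to\infty$. For graph sequences with $V(H_n)=V(G_n)$, $\mathcal{H}\prec\mathcal{G}$ means there is an integer $L>0$ with $d_{G_n}(x,y)\le L\,d_{H_n}(x,y)$ for all $n,x,y$ (shortest path metrics), and $\mathcal{G}\simeq\mathcal{H}$ means $\mathcal{H}\prec\mathcal{G}$ and $\mathcal{G}\prec\mathcal{H}$. For a finite graph $G$, $\varepsilon_K(G)$ is the $K$-vector space spanned by oriented edges with $(x,y)=-(y,x)$; a cycle $(x_1,\dots,x_m,x_1)$ gives the vector $\sum_{i=1}^{m-1}(x_i,x_{i+1})+(x_m,x_1)$; $C^q_K(G)$ is the subspace spanned by the vectors of cycles of length at most $q$. $s^q_K(\mathcal{G})=\liminf_n \frac{|E(G_n)|-\dim_K C^q_K(G_n)}{|V(G_n)|}-1$ and $\beta_K(\mathcal{G})=\inf_q s^q_K(\mathcal{G})$. *)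

From HB Require Import structures.
From mathcomp Require Import all_boot all_order all_algebra.
From mathcomp Require Import all_classical all_reals all_analysis.
Set Implicit Arguments. Unset Strict Implicit. Unset Printing Implicit Defensive.
Import Order.TTheory GRing.Theory Num.Theory.

Definition simple_graph (T : finType) (e : rel T) :=
  symmetric e /\ irreflexive e.

Definition walk (T : finType) (e : rel T) (k : nat) (x y : T) : bool :=
  [exists p : k.-tuple T, path e x p && (last x p == y)].

(* shortest path distance; None = infinity (x, y in different components).
   If y is reachable from x, a shortest walk has length < #|T|. *)
Definition gdist (T : finType) (e : rel T) (x y : T) : option nat :=
  if [exists k : 'I_#|T|, walk e k x y]
  then Some (find (fun k => walk e k x y) (iota 0 #|T|))
  else None.

Definition dist_le (L : nat) (dG dH : option nat) : bool :=
  match dG, dH with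
  | _, None => true
  | None, Some _ => false
  | Some a, Some b => (a <= L * b)%N
  end.

Definition graph_seq (V : nat -> finType) (g : forall n, rel (V n)) :=
  [/\ forall n, simple_graph (g n),
      exists D : nat, forall n (x : V n), (#|[set y | g n x y]| <= D)%N
    & forall M : nat, exists N : nat, forall n, (N <= n)%N -> (M <= #|V n|)%N].

Definition seq_prec (V : nat -> finType) (h g : forall n, rel (V n)) :=
  exists L : nat, (0 < L)%N /\
    forall n (x y : V n), dist_le L (gdist (g n) x y) (gdist (h n) x y).

Definition seq_equiv (V : nat -> finType) (g h : forall n, rel (V n)) :=
  seq_prec h g /\ seq_prec g h.

Definition nedges (T : finType) (e : rel T) : nat :=
  #|[set A : {set T} | [exists x, exists y, e x y && (A == [set x; y])]]|.

(* the ambient space: antisymmetric-by-construction vectors, coordinates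
   indexed by ordered pairs of vertices (flattened matrices). The oriented
   edge (x,y) is the vector E_xy - E_yx, so that (x,y) = -(y,x); the oriented
   edges of G span eps_K(G). *)
Definition oedge (K : fieldType) (T : finType) (x y : T) : 'rV[K]_(#|T| * #|T|) :=
  mxvec (delta_mx (enum_rank x) (enum_rank y) - delta_mx (enum_rank y) (enum_rank x)).

Definition cycvec (K : fieldType) (T : finType) (s : seq T) : 'rV[K]_(#|T| * #|T|) :=
  match s with
  | [::] => 0
  | x1 :: _ =>
      \sum_(i < (size s).-1) oedge K (nth x1 s i) (nth x1 s i.+1)
      + oedge K (last x1 s) x1
  end.

Definition is_cycle (T : finType) (e : rel T) (s : seq T) : bool :=
  uniq s && cycle e s.

Definition Cq (K : fieldType) (T : finType) (e : rel T) (q : nat) :=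
  (\sum_(m < q.+1) \sum_(s : m.-tuple T | is_cycle e s)
      <<cycvec K (s : seq T)>>)%MS.

Definition dimCq (K : fieldType) (T : finType) (e : rel T) (q : nat) : nat :=
  \rank (Cq K e q).

Local Open Scope ring_scope.

Definition sq_term (K : fieldType) (R : realType) (V : nat -> finType)
  (g : forall n, rel (V n)) (q n : nat) : R :=
  ((nedges (g n))%:R - (dimCq K (g n) q)%:R) / (#|V n|)%:R.

Local Open Scope ereal_scope.

Definition s_q (K : fieldType) (R : realType) (V : nat -> finType)
  (g : forall n, rel (V n)) (q : nat) : \bar R :=
  limn_einf (fun n => (sq_term K R g q n)%:E) - 1%:E.

Definition beta (K : fieldType) (R : realType) (V : nat -> finType)
  (g : forall n, rel (V n)) : \bar R :=
  ereal_inf [set s_q K R g q | q in [set: nat]].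

(* Realise eps_K(G) as the row space [edge_space] spanned by the oriented
   edges, of dimension |E(G)|; it contains C^q_K(G).  If d_G <= L d_H, sending
   each oriented edge of H to the vector of a G-walk of length <= L between its
   ends defines a matrix P with C^q_K(H) P <= C^(L q)_K(G), because the vector of
   a closed walk is a sum of vectors of cycles no longer than it.  If moreover
   d_H <= L' d_G, each edge of G differs from the image under P of an H-walk by
   a closed G-walk of length <= L L' + 1, so eps_K(G) <= eps_K(H) P + C^q'_K(G)
   for q' > L L'.  Comparing ranks gives
   |E(G)| - dim C^q'_K(G) <= |E(H)| - dim C^q_K(H) for q' = L q + L L' + 1,
   hence beta_K(G) <= beta_K(H), and equality by symmetry. *)

From HB Require Import structures.
From mathcomp Require Import all_boot all_order all_algebra.
From mathcomp Require Import all_classical all_reals all_analysis.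
From mathcomp Require Import zify lra.
Set Implicit Arguments. Unset Strict Implicit. Unset Printing Implicit Defensive.
Import Order.TTheory GRing.Theory Num.Theory.
Local Open Scope ring_scope.

Lemma last_rev_belast (T : Type) (x : T) (p : seq T) :
  last (last x p) (rev (belast x p)) = x.
Proof. by case: p => [|y p] //=; rewrite rev_cons last_rcons. Qed.

Lemma not_uniq_split (T : eqType) (s : seq T) :
  ~~ uniq s -> exists a z b c, s = a ++ z :: b ++ z :: c.
Proof.
elim: s => [|y s IHs] //=; rewrite negb_and negbK => /orP[/splitPr[b c] | /IHs].
  by exists [::], y, b, c.
by case=> a [z [b [c ->]]]; exists (y :: a), z, b, c.
Qed.

Section WalkVectors.
Variables (K : fieldType) (T : finType).

Fixpoint walkvec (x : T) (p : seq T) : 'rV[K]_(#|T| * #|T|) :=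
  if p is y :: p' then oedge K x y + walkvec y p' else 0.

Lemma oedge_swap (x y : T) : oedge K y x = - oedge K x y.
Proof. by rewrite /oedge -linearN /= opprB. Qed.

Lemma oedge_coord (x y a b : T) :
  oedge K x y 0 (mxvec_index (enum_rank a) (enum_rank b)) =
  ((a == x) && (b == y))%:R - ((a == y) && (b == x))%:R.
Proof. by rewrite /oedge mxvecE !mxE !(inj_eq enum_rank_inj). Qed.

Lemma walkvecE (x : T) (p : seq T) :
  walkvec x p = \sum_(i < size p) oedge K (nth x (x :: p) i) (nth x (x :: p) i.+1).
Proof.
elim: p x => [|y p IHp] x /=; first by rewrite big_ord0.
rewrite big_ord_recl IHp; congr (_ + _); apply: eq_bigr => i _ /=.
by rewrite !(set_nth_default y x) //=; [exact: ltn_ord | exact/leqW/ltn_ord].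
Qed.

Lemma walkvec_cat (x : T) (p q : seq T) :
  walkvec x (p ++ q) = walkvec x p + walkvec (last x p) q.
Proof. by elim: p x => [|y p IHp] x /=; rewrite ?add0r // IHp addrA. Qed.

Lemma walkvec_rev (x : T) (p : seq T) :
  walkvec (last x p) (rev (belast x p)) = - walkvec x p.
Proof.
elim: p x => [|y p IHp] x /=; first by rewrite oppr0.
rewrite rev_cons -cats1 walkvec_cat IHp last_rev_belast /= addr0 oedge_swap.
by rewrite opprD addrC.
Qed.

Lemma cycvecE (x : T) (s : seq T) : cycvec K (x :: s) = walkvec x (rcons s x).
Proof. by rewrite /cycvec -walkvecE -cats1 walkvec_cat /= addr0. Qed.

End WalkVectors.

Section CycleSpace.
Variables (K : fieldType) (T : finType) (e : rel T).

Definition edge_space : 'M[K]_(#|T| * #|T|) :=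
  (\sum_(p : T * T | e p.1 p.2) <<oedge K p.1 p.2>>)%MS.

Lemma oedge_sub_edge_space (x y : T) : e x y -> (oedge K x y <= edge_space)%MS.
Proof. by move=> exy; apply: (sumsmx_sup (x, y)); rewrite ?genmxE. Qed.

Lemma walkvec_sub_edge_space (x : T) (p : seq T) :
  path e x p -> (walkvec K x p <= edge_space)%MS.
Proof.
elim: p x => [|y p IHp] x /=; first by rewrite sub0mx.
by case/andP=> exy pyp; rewrite addmx_sub ?oedge_sub_edge_space ?IHp.
Qed.

Lemma Cq_sub_edge_space (q : nat) : (Cq K e q <= edge_space)%MS.
Proof.
apply/sumsmx_subP => m _; apply/sumsmx_subP => -[[|x s] size_s] cycle_s.
  by rewrite genmxE sub0mx.
rewrite genmxE [tval _]/= cycvecE walkvec_sub_edge_space //.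
by case/andP: cycle_s.
Qed.

Lemma cycvec_sub_Cq (s : seq T) (q : nat) :
  is_cycle e s -> (size s <= q)%N -> (cycvec K s <= Cq K e q)%MS.
Proof.
move=> cycle_s le_s_q; have lt_s_q1 : (size s < q.+1)%N by [].
apply: (sumsmx_sup (Ordinal lt_s_q1)) => //.
by apply: (sumsmx_sup (in_tuple s)); rewrite ?genmxE.
Qed.

(* Cut the walk at a repeated vertex into two shorter closed walks, until it
   is a cycle. *)
Lemma closed_walkvec_sub_Cq (x : T) (p : seq T) (q : nat) :
  path e x p -> last x p = x -> (size p <= q)%N -> (walkvec K x p <= Cq K e q)%MS.
Proof.
have [n] := ubnP (size p); elim: n => // n IHn in x p *.
move=> lt_p_n e_p last_p le_p_q; have [uniq_p | /not_uniq_split] := boolP (uniq p).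
  case: p => [|y s] in lt_p_n e_p last_p le_p_q uniq_p *; first by rewrite sub0mx.
  move: e_p last_p => /= /andP[exy e_s] last_s.
  have cycle_ys : is_cycle e (y :: s).
    by rewrite /is_cycle uniq_p /= rcons_path e_s last_s exy.
  have := cycvec_sub_Cq cycle_ys le_p_q.
  by rewrite cycvecE -cats1 walkvec_cat /= last_s addr0 addrC.
move=> [a [z [b [c def_p]]]]; move: lt_p_n e_p last_p le_p_q.
rewrite def_p !size_cat /= !size_cat /= !cat_path /= cat_path /= last_cat /=.
rewrite last_cat /= => lt_p_n /and5P[e_a e_z e_b e_z' e_c] last_c le_p_q.
have -> : walkvec K x (a ++ z :: b ++ z :: c) =
    walkvec K x (a ++ z :: c) + walkvec K z (b ++ [:: z]).
  rewrite !(walkvec_cat, last_cat) /= !(walkvec_cat, last_cat) /= addr0.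
  by rewrite -!addrA; congr (_ + (_ + _)); rewrite [RHS]addrC addrA.
apply: addmx_sub; apply: IHn; rewrite ?last_cat ?size_cat //=; try lia.
- by rewrite cat_path /= e_a e_z e_c.
- by rewrite cat_path /= e_b e_z'.
Qed.

Hypotheses (e_sym : symmetric e) (e_irr : irreflexive e).

Definition oriented_edges : {set T * T} :=
  [set p | e p.1 p.2 && (enum_rank p.1 < enum_rank p.2)%N].

Lemma oriented_edgeP (x y : T) :
  e x y -> ((x, y) \in oriented_edges) || ((y, x) \in oriented_edges).
Proof.
move=> exy; rewrite !inE /= [e y x]e_sym exy /= -neq_ltn.
by apply: contraTneq exy => /ord_inj/enum_rank_inj ->; rewrite e_irr.
Qed.

Lemma card_oriented_edges : #|oriented_edges| = nedges e.
Proof.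
rewrite /nedges -(@card_in_imset _ _ (fun p => [set p.1; p.2])).
  congr #|pred_of_set _|; apply/setP => A; rewrite inE.
  apply/imsetP/existsP => [[[x y] /setIdP[exy _] ->] | [x /existsP[y]]].
    by exists x; apply/existsP; exists y; rewrite exy eqxx.
  case/andP=> exy /eqP ->; case/orP: (oriented_edgeP exy) => oriented_xy.
    by exists (x, y).
  by exists (y, x); rewrite // finset.setUC.
move=> [a b] [c d] /setIdP[_ /= ab] /setIdP[_ /= cd] /= /setP eq_ab_cd.
move: ab; have: a \in [set c; d] by rewrite -eq_ab_cd set21.
have: b \in [set c; d] by rewrite -eq_ab_cd set22.
by rewrite !inE => /orP[] /eqP-> /orP[] /eqP->; rewrite ?ltnn // ltnNge (ltnW cd).
Qed.

Lemma mxrank_sum_gen_le (I : finType) (P : pred I) n (v : I -> 'rV[K]_n) :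
  (\rank (\sum_(i | P i) <<v i>>)%MS <= #|P|)%N.
Proof.
rewrite -sum1_card; elim/big_rec2: _ => [|i r A _ IH]; first by rewrite mxrank0.
apply: leq_trans (mxrank_adds_leqif _ _).1 _.
by apply: leq_add => //; rewrite mxrank_gen rank_leq_row.
Qed.

Definition edge_coords : 'M[K]_(#|T| * #|T|, #|oriented_edges|) :=
  \matrix_(i, j) (i == mxvec_index (enum_rank (enum_val j).1)
                                   (enum_rank (enum_val j).2))%:R.

Lemma mul_edge_coords (v : 'rV[K]_(#|T| * #|T|)) j :
  (v *m edge_coords) 0 j =
  v 0 (mxvec_index (enum_rank (enum_val j).1) (enum_rank (enum_val j).2)).
Proof.
set i0 := mxvec_index _ _; rewrite mxE (bigD1 i0) //= mxE eqxx mulr1 big1 ?addr0 //.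
by move=> i /negbTE neq_i; rewrite mxE neq_i mulr0.
Qed.

Lemma oedge_mul_edge_coords j :
  oedge K (enum_val j).1 (enum_val j).2 *m edge_coords = delta_mx 0 j.
Proof.
apply/rowP => k; rewrite mul_edge_coords oedge_coord mxE eqxx /=.
rewrite -(inj_eq enum_val_inj); move: (enum_valP k) (enum_valP j).
case: (enum_val k) => a b; case: (enum_val j) => x y; rewrite !inE /=.
move=> /andP[_ ab] /andP[_ xy]; rewrite xpair_eqE.
have -> : (a == y) && (b == x) = false.
  by apply/andP => -[/eqP ay /eqP bx]; move: ab; rewrite ay bx ltnNge ltnW.
by rewrite subr0.
Qed.

Lemma rank_edge_space : \rank edge_space = nedges e.
Proof.
rewrite -card_oriented_edges; apply/eqP; rewrite eqn_leq; apply/andP; split.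
  apply: leq_trans (mxrank_sum_gen_le _ (fun p => oedge K p.1 p.2)).
  apply/mxrankS/sumsmx_subP => -[x y] /= exy; rewrite genmxE.
  case/orP: (oriented_edgeP exy) => oriented_xy; apply: (sumsmx_sup _ oriented_xy).
    by rewrite genmxE.
  by rewrite genmxE oedge_swap -scaleN1r scalemx_sub.
have: (1%:M <= edge_space *m edge_coords)%MS.
  apply/row_subP => j; rewrite row1 -oedge_mul_edge_coords submxMr //.
  by apply: oedge_sub_edge_space; have := enum_valP j; rewrite inE => /andP[].
by move/mxrankS; rewrite mxrank1 => /leq_trans; apply; apply: mxrankM_maxl.
Qed.

End CycleSpace.

Section Distance.
Variables (T : finType) (e : rel T).

Lemma gdist_walk (x y : T) (d : nat) : gdist e x y = Some d ->
  exists p, [/\ size p = d, path e x p & last x p = y].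
Proof.
rewrite /gdist; case: ifP => // /existsP[k walk_k] [<-].
have has_walk : has (fun k => walk e k x y) (iota 0 #|T|).
  by apply/hasP; exists (val k); rewrite // mem_iota add0n ltn_ord.
have := nth_find 0 has_walk; rewrite nth_iota ?add0n; last first.
  by move: has_walk; rewrite has_find size_iota.
by case/existsP=> p /andP[e_p /eqP last_p]; exists p; rewrite size_tuple.
Qed.

Lemma gdist_edge (x y : T) :
  e x y -> x != y -> exists2 d, gdist e x y = Some d & (d <= 1)%N.
Proof.
move=> exy neq_xy; have walk1 : walk e 1 x y.
  by apply/existsP; exists [tuple y]; rewrite /= exy eqxx.
have card_T : (1 < #|T|)%N.
  by have := max_card (mem [set x; y]); rewrite cards2 neq_xy.
rewrite /gdist ifT; last by apply/existsP; exists (Ordinal card_T).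
eexists; first by [].
by rewrite leqNgt; apply/negP => /(before_find 0); rewrite nth_iota // add0n walk1.
Qed.

End Distance.

Lemma short_walk_of_edge (T : finType) (g h : rel T) (L : nat) (x y : T) :
  dist_le L (gdist g x y) (gdist h x y) -> h x y -> x != y ->
  exists p, [/\ path g x p, last x p = y & (size p <= L)%N].
Proof.
move=> le_dist hxy neq_xy; have [d dist_h le_d1] := gdist_edge hxy neq_xy.
move: le_dist; rewrite dist_h /=; case dist_g: (gdist g x y) => [d'|] //= le_d'.
have [p [size_p g_p last_p]] := gdist_walk dist_g; exists p; split => //.
rewrite size_p; apply: leq_trans le_d' _.
by rewrite -[leqRHS]muln1 leq_mul2l le_d1 orbT.
Qed.

Section Transfer.
Variables (K : fieldType) (T : finType) (g h : rel T).
Hypotheses (g_sym : symmetric g) (h_sym : symmetric h) (h_irr : irreflexive h).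
Variables (L : nat) (route : T -> T -> seq T).
Hypothesis route_walk : forall x y, h x y ->
  [/\ path g x (route x y), last x (route x y) = y & (size (route x y) <= L)%N].

Local Notation idx x y := (mxvec_index (enum_rank x) (enum_rank y)).

(* Each edge {x, y} of h, oriented so that x comes first in the enumeration of
   T, is sent to the vector of its route; the opposite orientation is then sent
   to the opposite vector. *)
Definition transfer_mx : 'M[K]_(#|T| * #|T|) :=
  \sum_(p : T * T | (enum_rank p.1 < enum_rank p.2)%N)
     delta_mx (idx p.1 p.2) 0 *m walkvec K p.1 (route p.1 p.2).

Lemma oedge_mul_transfer (x y : T) : x != y ->
  oedge K x y *m transfer_mx =
  if (enum_rank x < enum_rank y)%N then walkvec K x (route x y)
  else - walkvec K y (route y x).
Proof.
move=> neq_xy; rewrite /transfer_mx mulmx_sumr.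
under eq_bigr => p _.
  rewrite mulmxA -colE [col _ _]mx11_scalar mul_scalar_mx mxE oedge_coord.
  rewrite -[_ && _]/(p == (x, y)) -[(p.1 == y) && _]/(p == (y, x)) scalerBl.
over.
have sum_at (p0 : T * T) :
    \sum_(p | (enum_rank p.1 < enum_rank p.2)%N)
      (p == p0)%:R *: walkvec K p.1 (route p.1 p.2) =
    if (enum_rank p0.1 < enum_rank p0.2)%N then walkvec K p0.1 (route p0.1 p0.2)
    else 0.
  rewrite big_mkcond (bigD1 p0) //= eqxx scale1r big1 ?addr0 //.
  by move=> p /negbTE neq_p; rewrite neq_p scale0r if_same.
rewrite sumrB !sum_at /=.
case: ssrnat.ltngtP => [_|_|/ord_inj/enum_rank_inj eq_xy]; rewrite ?subr0 ?sub0r //.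
by rewrite eq_xy eqxx in neq_xy.
Qed.

Lemma oedge_mul_transfer_walk (x y : T) : h x y -> exists p,
  [/\ path g x p, last x p = y, (size p <= L)%N
    & oedge K x y *m transfer_mx = walkvec K x p].
Proof.
move=> hxy; have neq_xy : x != y by apply: contraTneq hxy => ->; rewrite h_irr.
rewrite oedge_mul_transfer //; case: ifP => _.
  by have [g_p last_p size_p] := route_walk hxy; exists (route x y).
rewrite h_sym in hxy; have [g_p last_p size_p] := route_walk hxy.
exists (rev (belast y (route y x))); split.
- rewrite -[X in path _ X]last_p rev_path; apply: sub_path g_p => a b.
  by rewrite /= g_sym.
- by rewrite -[X in last X _]last_p last_rev_belast.
- by rewrite size_rev size_belast.
- by rewrite -[X in walkvec _ X (rev _)]last_p walkvec_rev.
Qed.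

Lemma walkvec_mul_transfer (x : T) (p : seq T) : path h x p -> exists p',
  [/\ path g x p', last x p' = last x p, (size p' <= L * size p)%N
    & walkvec K x p *m transfer_mx = walkvec K x p'].
Proof.
elim: p x => [|y p IHp] x /=; first by exists [::]; rewrite mul0mx muln0.
case/andP=> hxy h_p.
have [p1 [g_p1 last_p1 size_p1 image_xy]] := oedge_mul_transfer_walk hxy.
have [p2 [g_p2 last_p2 size_p2 image_p]] := IHp y h_p.
exists (p1 ++ p2); split.
- by rewrite cat_path g_p1 last_p1.
- by rewrite last_cat last_p1.
- by rewrite size_cat mulnS leq_add.
- by rewrite mulmxDl image_xy image_p walkvec_cat last_p1.
Qed.

Lemma Cq_mul_transfer (q q' : nat) :
  (L * q <= q')%N -> (Cq K h q *m transfer_mx <= Cq K g q')%MS.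
Proof.
move=> le_q_q'; rewrite sumsmxMr; apply/sumsmx_subP => m _.
rewrite sumsmxMr; apply/sumsmx_subP => -[[|x s] size_s] cycle_s.
  by rewrite (eqmxMr _ (genmxE _)) mul0mx sub0mx.
rewrite (eqmxMr _ (genmxE _)) [tval _]/= cycvecE.
case/andP: cycle_s => _ /= h_s.
have [p' [g_p' last_p' size_p' ->]] := walkvec_mul_transfer h_s.
apply: closed_walkvec_sub_Cq; rewrite // ?last_p' ?last_rcons //.
apply: leq_trans size_p' (leq_trans _ le_q_q'); rewrite leq_mul2l size_rcons.
by have := ltn_ord m; rewrite -(eqP size_s) ltnS => ->; rewrite orbT.
Qed.

Lemma edge_space_sub_transfer (L' q : nat) :
  irreflexive g -> (forall x y, dist_le L' (gdist h x y) (gdist g x y)) ->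
  (L * L' < q)%N -> (edge_space K g <= edge_space K h *m transfer_mx + Cq K g q)%MS.
Proof.
move=> g_irr le_dist lt_LL'_q; apply/sumsmx_subP => -[x y] /= gxy; rewrite genmxE.
have neq_xy : x != y by apply: contraTneq gxy => ->; rewrite g_irr.
have [p [h_p last_p size_p]] := short_walk_of_edge (le_dist x y) gxy neq_xy.
have [p' [g_p' last_p' size_p' image_p]] := walkvec_mul_transfer h_p.
rewrite last_p in last_p'.
(* The edge is p' plus the closed walk that takes the edge and returns along p'. *)
have -> : oedge K x y = walkvec K x p' + walkvec K x (y :: rev (belast x p')).
  by rewrite /= -[X in walkvec _ X (rev _)]last_p' walkvec_rev addrC subrK.
apply: addmx_sub_adds; first by rewrite -image_p submxMr ?walkvec_sub_edge_space.
apply: closed_walkvec_sub_Cq => /=.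
- rewrite gxy -[X in path _ X]last_p' rev_path; apply: sub_path g_p' => a b.
  by rewrite /= g_sym.
- by rewrite -[X in last X _]last_p' last_rev_belast.
- rewrite size_rev size_belast; apply: leq_trans lt_LL'_q.
  by rewrite ltnS (leq_trans size_p') // leq_mul2l size_p orbT.
Qed.

End Transfer.

(* rank A <= rank (B P) + rank C - rank (D P), while
   rank B - rank (B P) = dim (B :&: ker P) >= dim (D :&: ker P) = rank D - rank (D P). *)
Lemma mxrank_transfer_le (F : fieldType) m1 m2 m3 m4 n p
    (A : 'M[F]_(m1, p)) (B : 'M[F]_(m2, n)) (C : 'M[F]_(m3, p)) (D : 'M[F]_(m4, n))
    (P : 'M[F]_(n, p)) :
  (A <= B *m P + C)%MS -> (D *m P <= C)%MS -> (D <= B)%MS ->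
  (\rank A + \rank D <= \rank B + \rank C)%N.
Proof.
move=> sub_A sub_DP sub_D.
have le_A := mxrankS sub_A; have rank_sum := mxrank_sum_cap (B *m P) C.
have le_DP : (\rank (D *m P) <= \rank (B *m P :&: C))%N.
  by rewrite mxrankS // sub_capmx submxMr.
have rank_BP := mxrank_mul_ker B P; have rank_DP := mxrank_mul_ker D P.
have le_ker : (\rank (D :&: kermx P) <= \rank (B :&: kermx P))%N.
  by rewrite mxrankS // capmxS.
lia.
Qed.

Lemma nedges_dimCq_le (K : fieldType) (T : finType) (g h : rel T) (L L' q : nat) :
  simple_graph g -> simple_graph h ->
  (forall x y, dist_le L (gdist g x y) (gdist h x y)) ->
  (forall x y, dist_le L' (gdist h x y) (gdist g x y)) ->
  (nedges g + dimCq K h q <= nedges h + dimCq K g (L * q + (L * L').+1))%N.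
Proof.
move=> [g_sym g_irr] [h_sym h_irr] le_gh le_hg.
pose short_route (p : T * T) r :=
  h p.1 p.2 -> [/\ path g p.1 r, last p.1 r = p.2 & (size r <= L)%N].
have [route route_walk] : {route & forall p, short_route p (route p)}.
  apply: choice => -[x y]; rewrite /short_route /=.
  have [hxy|_] := boolP (h x y); last by exists [::].
  have neq_xy : x != y by apply: contraTneq hxy => ->; rewrite h_irr.
  by have [p walk_p] := short_walk_of_edge (le_gh x y) hxy neq_xy; exists p.
pose croute x y := route (x, y).
have croute_walk x y : h x y ->
    [/\ path g x (croute x y), last x (croute x y) = y & (size (croute x y) <= L)%N].
  exact: route_walk (x, y).
have sub_edges := edge_space_sub_transfer K g_sym h_sym h_irr croute_walk g_irr le_hg
  (leq_addl (L * q) (L * L').+1).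
have sub_cycles := Cq_mul_transfer K g_sym h_sym h_irr croute_walk
  (leq_addr (L * L').+1 (L * q)).
have := mxrank_transfer_le sub_edges sub_cycles (Cq_sub_edge_space K h q).
by rewrite /dimCq !rank_edge_space.
Qed.

Local Open Scope ereal_scope.

Lemma le_limn_einf (R : realType) (u v : (\bar R)^nat) :
  (forall n, u n <= v n) -> limn_einf u <= limn_einf v.
Proof.
move=> le_uv; rewrite !limn_einf_lim.
apply: lee_lim; [exact: is_cvg_einfs | exact: is_cvg_einfs |].
apply: nearW => n; apply: le_ereal_inf_tmp => _ [m /= le_nm <-].
by apply: le_trans (le_uv m); apply: ereal_inf_lbound; exists m.
Qed.

Lemma s_q_le (K : fieldType) (R : realType) (V : nat -> finType)
    (g h : forall n, rel (V n)) (q q' : nat) :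
  (forall n, nedges (g n) + dimCq K (h n) q' <= nedges (h n) + dimCq K (g n) q)%N ->
  s_q K R g q <= s_q K R h q'.
Proof.
move=> le_gh; rewrite /s_q leeD2r // le_limn_einf // => n; rewrite lee_fin.
rewrite /sq_term ler_wpM2r ?invr_ge0 ?ler0n //.
by have := le_gh n; rewrite -(ler_nat R) !natrD => ?; lra.
Qed.

Lemma beta_le (K : fieldType) (R : realType) (V : nat -> finType)
    (g h : forall n, rel (V n)) :
  graph_seq g -> graph_seq h -> seq_prec h g -> seq_prec g h ->
  beta K R g <= beta K R h.
Proof.
move=> [simple_g _ _] [simple_h _ _] [L [_ le_gh]] [L' [_ le_hg]].
apply: le_ereal_inf_tmp => _ [q _ <-].
apply: le_trans (ereal_inf_lbound _) _; first by exists (L * q + (L * L').+1)%N.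
by apply: s_q_le => n; apply: nedges_dimCq_le.
Qed.

Theorem proposition2 (K : fieldType) (R : realType) (V : nat -> finType)
  (g h : forall n, rel (V n)) :
  graph_seq g -> graph_seq h -> seq_equiv g h ->
  beta K R g = beta K R h.
Proof.
move=> graph_g graph_h [prec_hg prec_gh].
by apply/le_anti/andP; split; apply: beta_le.
Qed.
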